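(* Let $A_n(x) = x^n + a_1 x^{n-1} + \dots + a_n$ be a (complex) polynomial whose distinct roots $x_1, \dots, x_m$ have known multiplicities $\alpha_1, \dots, \alpha_m$ (positive integers with $\alpha_1 + \dots + \alpha_m = n$). Given initial approximations $x_1^{[0]}, \dots, x_m^{[0]}$, define iterates for $k = 0,1,2,\dots$ and $i = 1,\dots,m$ by $$x_i^{[k+1]} = x_i^{[k]} - \alpha_i \left[ S_i^{[k]}(x_i^{[k]}) + \sum_{j=1, j\neq i}^{m} \alpha_j \,(x_j^{[k]} - x_i^{[k]})^{-2}\, A_n(x_j^{[k]}) \left[ \frac{S_j^{[k]}(x_j^{[k]})}{\alpha_j}\right]^{\alpha_j - 1} \Big/ Q_j^{[k]}(x_j^{[k]}) \right]^{-1},$$ where for $p = 1,\dots,m$, $$Q_p^{[k]}(x) = \prod_{l=1, l\neq p}^{m} (x - x_l^{[k]})^{\alpha_l}, \qquad S_p^{[k]}(x) = \frac{A_n'(x)}{A_n(x)} - \frac{Q_p^{[k]\prime}(x)}{Q_p^{[k]}(x)}.$$ Let $d = \min_{i\neq j} |x_i - x_j|$, and let $c, q$ be real positive constants such that $q < 1$, $d - 2c > 0$, and $$2c^2 n (d-2c)^{-2}\Big[ c(d-2c)^{-1} + \big(1 + c(d-2c)^{-1}\big)\,[N + MN + M] \Big] < \alpha_i \quad \text{for all } i = 1,\dots,m,$$ where $M = \big(1 + c/(d-2c)\big)^n - 1$ and $N = \big(1 + n\,(c/(d-2c))^2\big)^{n-1} - 1$. Suppose the initial approximations satisfy $|x_i^{[0]}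 - x_i| < cq$ for $i = 1,\dots,m$. Then for every natural number $k$, $$|x_i^{[k]} - x_i| < c\, q^{4^k}, \qquad i = 1,\dots,m.$$
   Context: The iteration is understood in the sense that all quantities appearing in the formula are defined (the relevant denominators are nonzero). $Q_p^{[k]\prime}$ denotes the derivative of $Q_p^{[k]}$ with respect to $x$, and $A_n'$ the derivative of $A_n$. *)

From mathcomp Require Import all_boot all_order all_algebra.
From mathcomp Require Import reals complex.
Set Implicit Arguments. Unset Strict Implicit. Unset Printing Implicit Defensive.
Import Order.TTheory GRing.Theory Num.Theory.
Local Open Scope ring_scope.

Section Iteration.
Variables (R : realType) (m : nat).
Local Notation C := R[i].

Definition Qpol (alpha : 'I_m -> nat) (x : 'I_m -> C) (p : 'I_m) : {poly C} :=
  \prod_(l < m | l != p) ('X - (x l)%:P) ^+ alpha l.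

Definition Sfun (A : {poly C}) (alpha : 'I_m -> nat) (x : 'I_m -> C)
  (p : 'I_m) (z : C) : C :=
  A^`().[z] / A.[z] - (Qpol alpha x p)^`().[z] / (Qpol alpha x p).[z].

Definition bracket (A : {poly C}) (alpha : 'I_m -> nat) (x : 'I_m -> C)
  (i : 'I_m) : C :=
  Sfun A alpha x i (x i) +
  \sum_(j < m | j != i)
     (alpha j)%:R * (x j - x i) ^- 2 * A.[x j]
       * (Sfun A alpha x j (x j) / (alpha j)%:R) ^+ (alpha j).-1
       / (Qpol alpha x j).[x j].

Definition step (A : {poly C}) (alpha : 'I_m -> nat) (x : 'I_m -> C)
  (i : 'I_m) : C :=
  x i - (alpha i)%:R * (bracket A alpha x i)^-1.

Definition step_defined (A : {poly C}) (alpha : 'I_m -> nat) (x : 'I_m -> C) : Prop :=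
  forall i : 'I_m,
    [/\ A.[x i] != 0, (Qpol alpha x i).[x i] != 0,
        (forall j : 'I_m, j != i -> x j != x i)
      & bracket A alpha x i != 0].

End Iteration.

From mathcomp Require Import all_boot all_order all_algebra.
From mathcomp Require Import reals complex.
From mathcomp Require Import ring lra.
Import Order.TTheory GRing.Theory Num.Theory ComplexField.Normc.
Set Implicit Arguments. Unset Strict Implicit. Unset Printing Implicit Defensive.
Local Open Scope ring_scope.
Local Open Scope complex_scope.

(* Write e_j = x_j - xi_j.  Expressing A and Q_j through their roots turns
   S_j(x_j) into alpha_j/e_j - sigma_j and the correction term
   A(x_j) [S_j(x_j)/alpha_j]^(alpha_j-1) / Q_j(x_j) into e_j corr_j with
   corr_j - 1 = O(e), so the bracket becomes alpha_i/e_i + remainder_i with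
   remainder_i = O(e^2).  Hence the new error is exactly
   e_i^2 remainder_i / (alpha_i + e_i remainder_i) = O(e^4).  Quantitatively,
   if all |e_j| < E <= c then, with s = E/c, |remainder_i| <= s^2/c Z where
   2 Z is at most the left-hand side of the hypothesis on alpha_i; the new
   error is then < s^4 c, which is c q^(4^(k+1)) for E = c q^(4^k). *)

Lemma ler_pdiv (F : numFieldType) (p P q Q : F) :
  0 <= p -> p <= P -> 0 < Q -> Q <= q -> p / q <= P / Q.
Proof.
move=> p_ge0 pP Q_gt0 Qq; have q_gt0 := lt_le_trans Q_gt0 Qq.
by apply: ler_pM; rewrite // ?invr_ge0 ?(ltW q_gt0) // lef_pV2 ?posrE.
Qed.

Section PerturbationOfOne.
Variable F : numDomainType.

Lemma norm_exprD1_sub1_le (u U : F) k :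
  `|u| <= U -> `|(1 + u) ^+ k - 1| <= (1 + U) ^+ k - 1.
Proof.
move=> uU; have U_ge0 := le_trans (normr_ge0 u) uU.
elim: k => [|k IH]; first by rewrite !expr0 !subrr normr0.
have -> : (1 + u) ^+ k.+1 - 1 = (1 + u) * ((1 + u) ^+ k - 1) + u by rewrite exprS; ring.
have -> : (1 + U) ^+ k.+1 - 1 = (1 + U) * ((1 + U) ^+ k - 1) + U by rewrite exprS; ring.
rewrite (le_trans (ler_normD _ _)) // lerD // normrM ler_pM ?normr_ge0 //.
by rewrite (le_trans (ler_normD _ _)) // normr1 lerD2l.
Qed.

Lemma norm_mul_sub1_le (a b A B : F) :
  `|a - 1| <= A -> `|b - 1| <= B -> `|a * b - 1| <= A * B + A + B.
Proof.
move=> ha hb.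
have -> : a * b - 1 = (a - 1) * (b - 1) + (a - 1) + (b - 1) by ring.
rewrite (le_trans (ler_normD _ _)) // lerD // (le_trans (ler_normD _ _)) //.
by rewrite lerD // normrM ler_pM ?normr_ge0.
Qed.

Lemma norm_prod_sub1_le (I : Type) (r : seq I) (P : pred I) (f g : I -> F) :
  (forall i, P i -> `|f i - 1| <= g i - 1) ->
  `|\prod_(i <- r | P i) f i - 1| <= \prod_(i <- r | P i) g i - 1.
Proof.
move=> fg; apply: (big_ind2 (fun a A => `|a - 1| <= A - 1)) => //.
  by rewrite !subrr normr0.
move=> a1 A1 a2 A2 h1 h2.
have -> : A1 * A2 - 1 = (A1 - 1) * (A2 - 1) + (A1 - 1) + (A2 - 1) by ring.
exact: norm_mul_sub1_le.
Qed.

(* Compare termwise in x^k - 1 = (x - 1) \sum_(i < k) x^i. *)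
Lemma exprD1_scale_sub1_le (s a : F) k :
  0 <= s -> s <= 1 -> 0 <= a -> (1 + s * a) ^+ k - 1 <= s * ((1 + a) ^+ k - 1).
Proof.
move=> s_ge0 s_le1 a_ge0; have sa_ge0 := mulr_ge0 s_ge0 a_ge0.
have addK1 x : 1 + x - 1 = x by rewrite addrC addKr.
rewrite !subrX1 !addK1 -mulrA !ler_wpM2l // ler_sum // => i _.
by apply: lerXn2r; rewrite ?nnegrE ?addr_ge0 // lerD2l ler_piMl.
Qed.

End PerturbationOfOne.

Section RealModulus.
Variable R : rcfType.
Implicit Types (z w : R[i]) (U : R).

Lemma normcE z : `|z| = (normc z)%:C.
Proof. by []. Qed.

Lemma normc_le z U : (normc z <= U) = (`|z| <= U%:C).
Proof. by rewrite normcE lecR. Qed.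

Lemma normc_ge0 z : 0 <= normc z.
Proof. by rewrite -ler0c -normcE normr_ge0. Qed.

Lemma normcX z k : normc (z ^+ k) = normc z ^+ k.
Proof. by apply: complexI; rewrite rmorphXn /= -!normcE normrX. Qed.

Lemma normc_nat k : normc (k%:R : R[i]) = k%:R.
Proof. by apply: complexI; rewrite rmorph_nat /= -normcE normr_nat. Qed.

Lemma normc_sum (I : Type) (r : seq I) (P : pred I) (f : I -> R[i]) :
  normc (\sum_(i <- r | P i) f i) <= \sum_(i <- r | P i) normc (f i).
Proof. by rewrite normc_le rmorph_sum; exact: ler_norm_sum. Qed.

Lemma lerB_normcD z w : normc z - normc w <= normc (z + w).
Proof. by rewrite -lecR rmorphB /= -!normcE lerB_normD. Qed.

Lemma normc_exprD1_sub1_le z U k :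
  normc z <= U -> normc ((1 + z) ^+ k - 1) <= (1 + U) ^+ k - 1.
Proof.
by rewrite !normc_le rmorphB rmorphXn rmorphD rmorph1; exact: norm_exprD1_sub1_le.
Qed.

Lemma normc_mul_sub1_le z w (A B : R) :
  normc (z - 1) <= A -> normc (w - 1) <= B -> normc (z * w - 1) <= A * B + A + B.
Proof.
by rewrite !normc_le !rmorphD rmorphM; exact: norm_mul_sub1_le.
Qed.

Lemma normc_prod_sub1_le (I : Type) (r : seq I) (P : pred I) (f : I -> R[i]) g :
  (forall i, P i -> normc (f i - 1) <= g i - 1) ->
  normc (\prod_(i <- r | P i) f i - 1) <= \prod_(i <- r | P i) g i - 1.
Proof.
move=> fg; rewrite normc_le rmorphB rmorph_prod rmorph1.
by apply: norm_prod_sub1_le => i Pi; have := fg i Pi; rewrite normc_le rmorphB rmorph1.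
Qed.

End RealModulus.

Lemma logder_prod_XsubC (F : fieldType) (I : Type) (r : seq I) (P : pred I)
    (a : I -> F) (k : I -> nat) (z : F) :
  (forall l, P l -> z != a l) ->
  (\prod_(l <- r | P l) ('X - (a l)%:P) ^+ k l)^`().[z]
    / (\prod_(l <- r | P l) ('X - (a l)%:P) ^+ k l).[z]
  = \sum_(l <- r | P l) (k l)%:R / (z - a l).
Proof.
move=> za; set p := \prod_(l <- r | P l) _.
suff [p_neq0 ->] : p.[z] != 0 /\
    p^`().[z] = (\sum_(l <- r | P l) (k l)%:R / (z - a l)) * p.[z].
  by rewrite mulfK.
rewrite /p; apply: (big_ind2 (fun p s => p.[z] != 0 /\ p^`().[z] = s * p.[z])).
- by rewrite hornerC oner_eq0 derivC hornerC mul0r.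
- move=> p1 s1 p2 s2 [p1z e1] [p2z e2]; rewrite hornerM mulf_neq0 //.
  by split=> //; rewrite derivM hornerD !hornerM e1 e2; ring.
- move=> l Pl; have zl : z - a l != 0 by rewrite subr_eq0 za.
  rewrite horner_exp hornerXsubC expf_neq0 //; split=> //.
  rewrite deriv_exp derivXsubC mul1r hornerMn !horner_exp hornerXsubC.
  case: (k l) => [|kk]; first by rewrite !mulr0n; ring.
  by rewrite -pred_Sn -mulr_natl exprS; field.
Qed.

Section OneStep.
Variables (R : realType) (m : nat) (A : {poly R[i]}) (xi x : 'I_m -> R[i])
  (alpha : 'I_m -> nat).
Hypotheses (alpha_gt0 : forall j, (0 < alpha j)%N)
  (A_def : A = \prod_(l < m) ('X - (xi l)%:P) ^+ alpha l)
  (x_def : step_defined A alpha x).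

Definition err j := x j - xi j.

Definition sigma j := \sum_(l < m | l != j)
  (alpha l)%:R * err l / ((x j - xi l) * (x j - x l)).

Definition corr j := (1 - err j * sigma j / (alpha j)%:R) ^+ (alpha j).-1 *
  \prod_(l < m | l != j) (1 + err l / (x j - x l)) ^+ alpha l.

Definition remainder i := \sum_(j < m | j != i) (alpha j)%:R *
  (err j ^+ 2 / ((x i - xi j) * (x i - x j) ^+ 2)
   + err j * (corr j - 1) / (x i - x j) ^+ 2).

Lemma horner_A z : A.[z] = \prod_(l < m) (z - xi l) ^+ alpha l.
Proof.
by rewrite A_def horner_prod; apply: eq_bigr => l _; rewrite horner_exp hornerXsubC.
Qed.

Lemma horner_Qpol j z :
  (Qpol alpha x j).[z] = \prod_(l < m | l != j) (z - x l) ^+ alpha l.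
Proof.
by rewrite /Qpol horner_prod; apply: eq_bigr => l _; rewrite horner_exp hornerXsubC.
Qed.

Lemma iterates_sub_neq0 j l : j != l -> x j - x l != 0.
Proof. by move=> jl; case: (x_def l) => _ _ /(_ j jl); rewrite subr_eq0. Qed.

Lemma iterate_root_sub_neq0 j l : x j - xi l != 0.
Proof.
case: (x_def j) => + _ _ _; rewrite horner_A (bigD1 l) //= mulf_eq0 negb_or.
by case/andP; rewrite expf_eq0 alpha_gt0.
Qed.

Lemma alpha_neq0 j : (alpha j)%:R != 0 :> R[i].
Proof. by rewrite pnatr_eq0 -lt0n alpha_gt0. Qed.

Lemma Sfun_iterate j : Sfun A alpha x j (x j) = (alpha j)%:R / err j - sigma j.
Proof.
have x_ne_xi l : true -> x j != xi l by rewrite -subr_eq0 iterate_root_sub_neq0.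
have x_ne_x l : l != j -> x j != x l.
  by move=> lj; rewrite -subr_eq0 iterates_sub_neq0 // eq_sym.
rewrite /Sfun A_def /Qpol (logder_prod_XsubC _ _ x_ne_xi) (logder_prod_XsubC _ _ x_ne_x).
rewrite (bigD1 j) //= /sigma -addrA; congr (_ + _).
rewrite -sumrN -big_split -sumrN; apply: eq_bigr => l lj /=.
have h1 := iterate_root_sub_neq0 j l; rewrite eq_sym in lj.
have h2 := iterates_sub_neq0 lj.
by rewrite /err; field; rewrite h1 h2.
Qed.

Lemma correction_iterate j :
  A.[x j] * (Sfun A alpha x j (x j) / (alpha j)%:R) ^+ (alpha j).-1
    / (Qpol alpha x j).[x j] = err j * corr j.
Proof.
rewrite Sfun_iterate horner_A horner_Qpol (bigD1 j) //= /corr.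
set Pa := \prod_(l < m | l != j) (x j - xi l) ^+ alpha l.
set Pq := \prod_(l < m | l != j) (x j - x l) ^+ alpha l.
set Pr := \prod_(l < m | l != j) (1 + err l / (x j - x l)) ^+ alpha l.
have PrPq : Pr * Pq = Pa.
  rewrite -big_split; apply: eq_bigr => l lj /=; rewrite -exprMn.
  rewrite eq_sym in lj; have jl := iterates_sub_neq0 lj.
  by congr (_ ^+ _); rewrite /err; field.
have Pq_neq0 : Pq != 0.
  by apply/prodf_neq0 => l lj; rewrite expf_neq0 // iterates_sub_neq0 // eq_sym.
have e_neq0 : err j != 0 := iterate_root_sub_neq0 j j.
have -> : ((alpha j)%:R / err j - sigma j) / (alpha j)%:R
          = (1 - err j * sigma j / (alpha j)%:R) / err j.
  by field; rewrite e_neq0 alpha_neq0.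
rewrite -PrPq -/(err j); case: (alpha j) (alpha_gt0 j) => // k _ /=.
have ek : err j ^+ k != 0 by rewrite expf_neq0.
by rewrite expr_div_n exprS; field; rewrite ek Pq_neq0.
Qed.

Lemma bracket_iterate i : bracket A alpha x i = (alpha i)%:R / err i + remainder i.
Proof.
rewrite /bracket Sfun_iterate /remainder /sigma -addrA; congr (_ + _).
rewrite -sumrN -big_split; apply: eq_bigr => j ji /=.
have := correction_iterate j; rewrite -!mulrA => ->.
have h1 := iterate_root_sub_neq0 i j; have h2 := iterates_sub_neq0 ji.
rewrite eq_sym in ji; have h3 := iterates_sub_neq0 ji.
by rewrite /err; field; rewrite h1 h2 h3.
Qed.

Lemma step_error_identity i :
  (step A alpha x i - xi i) * ((alpha i)%:R + err i * remainder i)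
  = err i ^+ 2 * remainder i.
Proof.
have b_neq0 : bracket A alpha x i != 0 by case: (x_def i).
have e_neq0 : err i != 0 := iterate_root_sub_neq0 i i.
have -> : remainder i = bracket A alpha x i - (alpha i)%:R / err i.
  by rewrite bracket_iterate addrC addKr.
by rewrite /step /err in e_neq0 *; field; rewrite e_neq0 b_neq0.
Qed.

Section Estimates.
Variables (d c E : R).
Let D : R := d - 2 * c.
Hypotheses (xi_sep : forall i j, i != j -> d <= normc (xi i - xi j))
  (c_gt0 : 0 < c) (D_gt0 : 0 < D) (E_gt0 : 0 < E) (E_le_c : E <= c)
  (err_lt : forall j, normc (err j) < E).

Let n := (\sum_(l < m) alpha l)%N.
Let t : R := c / D.
Let s : R := E / c.
Let M : R := (1 + t) ^+ n - 1.
Let N : R := (1 + n%:R * t ^+ 2) ^+ n.-1 - 1.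
Let K : R := N + M * N + M.
Let Z : R := n%:R * c ^+ 2 / D ^+ 2 * (t + K).

Let c_ge0 : 0 <= c. Proof. exact: ltW. Qed.
Let D_ge0 : 0 <= D. Proof. exact: ltW. Qed.
Let E_ge0 : 0 <= E. Proof. exact: ltW. Qed.
Let c_neq0 : c != 0. Proof. by rewrite gt_eqF. Qed.
Let D_neq0 : D != 0. Proof. by rewrite gt_eqF. Qed.
Let t_ge0 : 0 <= t. Proof. by rewrite divr_ge0 ?ltW. Qed.
Let s_gt0 : 0 < s. Proof. exact: divr_gt0. Qed.
Let s_ge0 : 0 <= s. Proof. exact: ltW. Qed.
Let s_le1 : s <= 1. Proof. by rewrite ler_pdivrMr // mul1r. Qed.
Let nt2_ge0 : 0 <= n%:R * t ^+ 2. Proof. by rewrite mulr_ge0 ?sqr_ge0. Qed.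
Let M_ge0 : 0 <= M. Proof. by rewrite subr_ge0 exprn_ege1 // lerDl. Qed.
Let N_ge0 : 0 <= N. Proof. by rewrite subr_ge0 exprn_ege1 // lerDl. Qed.
Let K_ge0 : 0 <= K. Proof. exact: addr_ge0 (addr_ge0 N_ge0 (mulr_ge0 M_ge0 N_ge0)) M_ge0. Qed.
Let Z_ge0 : 0 <= Z.
Proof.
apply: mulr_ge0 (addr_ge0 t_ge0 K_ge0).
exact: divr_ge0 (mulr_ge0 (ler0n _ n) (exprn_ge0 2 c_ge0)) (exprn_ge0 2 D_ge0).
Qed.

Lemma sum_alpha_neq_le_n j : (\sum_(l < m | l != j) alpha l <= n)%N.
Proof. by rewrite /n [X in (_ <= X)%N](bigD1 j) //= leq_addl. Qed.

Lemma alpha_le_n j : (alpha j <= n)%N.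
Proof. by rewrite /n (bigD1 j) //= leq_addr. Qed.

Lemma dist_iterate_root j l : j != l -> D <= normc (x j - xi l).
Proof.
move=> jl; have sep := xi_sep jl; have ej := err_lt j.
have tri : normc (xi j - xi l) <= normc (x j - xi l) + normc (err j).
  have -> : xi j - xi l = (x j - xi l) + - err j by rewrite /err; ring.
  by rewrite -(normcN (err j)) le_normcD.
(* [lra] ignores section hypotheses, so they are put in the goal. *)
have := E_le_c; have := c_gt0; rewrite /D; lra.
Qed.

Lemma dist_iterates j l : j != l -> D <= normc (x j - x l).
Proof.
move=> jl; have sep := xi_sep jl; have ej := err_lt j; have el := err_lt l.
have tri : normc (xi j - xi l) <= normc (x j - x l) + normc (err j) + normc (err l).
  have -> : xi j - xi l = (x j - x l) + - err j + err l by rewrite /err; ring.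
  rewrite -(normcN (err j)) (le_trans (le_normcD _ _)) // lerD2r.
  exact: le_normcD.
have := E_le_c; have := c_gt0; rewrite /D; lra.
Qed.

Lemma sigma_bound j : normc (sigma j) <= n%:R * (E / D ^+ 2).
Proof.
apply: le_trans (normc_sum _ _ _) _.
apply: (@le_trans _ _ (\sum_(l < m | l != j) (alpha l)%:R * (E / D ^+ 2))).
  apply: ler_sum => l lj; rewrite -mulrA normcM normc_nat ler_wpM2l //.
  rewrite normcM normcV normcM expr2; rewrite eq_sym in lj.
  apply: ler_pdiv (normc_ge0 _) (ltW (err_lt l)) (mulr_gt0 D_gt0 D_gt0) _.
  by rewrite ler_pM ?dist_iterate_root ?dist_iterates.
by rewrite -mulr_suml -natr_sum ler_wpM2r ?ler_nat ?sum_alpha_neq_le_n ?divr_ge0 ?sqr_ge0.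
Qed.

Lemma corr_first_factor_bound j :
  normc ((1 - err j * sigma j / (alpha j)%:R) ^+ (alpha j).-1 - 1) <= s * N.
Proof.
have u_le : normc (- (err j * sigma j / (alpha j)%:R)) <= s * (n%:R * t ^+ 2).
  have a_ge1 : 1 <= (alpha j)%:R :> R by rewrite ler1n alpha_gt0.
  rewrite normcN normcM normcV normcM normc_nat.
  apply: (@le_trans _ _ (normc (err j) * normc (sigma j))).
    by rewrite ler_pdivrMr ?(lt_le_trans ltr01) // ler_peMr ?mulr_ge0 ?normc_ge0.
  apply: le_trans (ler_pM _ _ (ltW (err_lt j)) (sigma_bound j)) _; rewrite ?normc_ge0 //.
  have -> : E * (n%:R * (E / D ^+ 2)) = s * (s * (n%:R * t ^+ 2)).
    by rewrite /s /t; field; rewrite c_neq0 D_neq0.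
  exact: ler_piMl (mulr_ge0 s_ge0 nt2_ge0) s_le1.
apply: le_trans (normc_exprD1_sub1_le _ u_le) (le_trans _ (exprD1_scale_sub1_le n.-1 s_ge0 s_le1 nt2_ge0)).
have one_le : 1 <= 1 + s * (n%:R * t ^+ 2) by rewrite lerDl mulr_ge0.
by rewrite lerD2r ler_weXn2l // -!subn1 leq_sub2r ?alpha_le_n.
Qed.

Lemma corr_second_factor_bound j :
  normc (\prod_(l < m | l != j) (1 + err l / (x j - x l)) ^+ alpha l - 1) <= s * M.
Proof.
have factor_le l : l != j ->
    normc ((1 + err l / (x j - x l)) ^+ alpha l - 1) <= (1 + s * t) ^+ alpha l - 1.
  move=> lj; apply: normc_exprD1_sub1_le; rewrite normcM normcV.
  have -> : s * t = E / D by rewrite /s /t; field; rewrite c_neq0 D_neq0.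
  apply: ler_pdiv (normc_ge0 _) (ltW (err_lt l)) D_gt0 _.
  by rewrite dist_iterates // eq_sym.
apply: le_trans (normc_prod_sub1_le _ factor_le) _.
rewrite prodrXr (le_trans _ (exprD1_scale_sub1_le n s_ge0 s_le1 t_ge0)) //.
have one_le : 1 <= 1 + s * t by rewrite lerDl mulr_ge0.
by rewrite lerD2r ler_weXn2l ?sum_alpha_neq_le_n.
Qed.

Lemma corr_bound j : normc (corr j - 1) <= s * K.
Proof.
apply: le_trans (normc_mul_sub1_le (corr_first_factor_bound j) (corr_second_factor_bound j)) _.
have s1 : 0 <= 1 - s by rewrite subr_ge0.
have := mulr_ge0 (mulr_ge0 s_ge0 (mulr_ge0 M_ge0 N_ge0)) s1.
rewrite /K; nra.
Qed.

Lemma remainder_bound i : normc (remainder i) <= s ^+ 2 / c * Z.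
Proof.
set B := E ^+ 2 / (D * D ^+ 2) + E * (s * K) / D ^+ 2.
have B_ge0 : 0 <= B.
  apply: addr_ge0; apply: divr_ge0; rewrite ?exprn_ge0 //.
  - exact: mulr_ge0 D_ge0 (exprn_ge0 2 D_ge0).
  - exact: mulr_ge0 E_ge0 (mulr_ge0 s_ge0 K_ge0).
apply: le_trans (normc_sum _ _ _) _.
apply: (@le_trans _ _ (\sum_(j < m | j != i) (alpha j)%:R * B)).
  apply: ler_sum => j ji; rewrite normcM normc_nat ler_wpM2l //.
  have Dx : D ^+ 2 <= normc (x i - x j) ^+ 2.
    by apply: lerXn2r; rewrite ?nnegrE ?normc_ge0 ?dist_iterates // eq_sym.
  apply: le_trans (le_normcD _ _) _; apply: lerD.
    rewrite normcM normcV (normcM (x i - xi j)) !normcX.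
    apply: ler_pdiv; first by rewrite exprn_ge0 ?normc_ge0.
    - by apply: lerXn2r; rewrite ?nnegrE ?normc_ge0 ?(ltW (err_lt j)).
    - by rewrite mulr_gt0 ?exprn_gt0.
    - by rewrite ler_pM ?exprn_ge0 ?dist_iterate_root // eq_sym.
  rewrite normcM normcV normcM normcX.
  apply: ler_pdiv; first by rewrite mulr_ge0 ?normc_ge0.
  - by rewrite ler_pM ?normc_ge0 ?(ltW (err_lt j)) ?corr_bound.
  - by rewrite exprn_gt0.
  - exact: Dx.
have -> : s ^+ 2 / c * Z = n%:R * B by rewrite /B /Z /s /t; field; rewrite c_neq0 D_neq0.
by rewrite -mulr_suml -natr_sum ler_wpM2r ?ler_nat ?sum_alpha_neq_le_n.
Qed.

Lemma err_mul_remainder_bound i : normc (err i) * normc (remainder i) <= Z.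
Proof.
apply: le_trans (ler_pM (normc_ge0 _) (normc_ge0 _) (ltW (err_lt i)) (remainder_bound i)) _.
have -> : E * (s ^+ 2 / c * Z) = s ^+ 3 * Z by rewrite /s; field.
by rewrite ler_piMl // exprn_ile1.
Qed.

Lemma step_error_bound i :
  2 * c ^+ 2 * n%:R * D ^- 2 * (t + (1 + t) * K) < (alpha i)%:R ->
  normc (step A alpha x i - xi i) < s ^+ 4 * c.
Proof.
move=> alpha_big.
have Z2_lt : 2 * Z < (alpha i)%:R.
  apply: le_lt_trans alpha_big.
  have -> : 2 * Z = 2 * c ^+ 2 * n%:R * D ^- 2 * (t + K) by rewrite /Z; ring.
  by rewrite ler_wpM2l ?mulr_ge0 ?invr_ge0 ?exprn_ge0 ?ler0n // lerD2l ler_peMl // lerDl.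
have eT_le := err_mul_remainder_bound i.
set u := normc (step A alpha x i - xi i).
set V := normc ((alpha i)%:R + err i * remainder i).
have uV : u * V = normc (err i) ^+ 2 * normc (remainder i).
  by rewrite -normcX -!normcM step_error_identity.
have V_ge : (alpha i)%:R - normc (err i) * normc (remainder i) <= V.
  by rewrite -normcM -[X in X - _](normc_nat R) lerB_normcD.
have V_gt0 : 0 < V by have := Z_ge0; lra.
have rem_le : normc (remainder i) <= s ^+ 2 / c * V.
  apply: le_trans (remainder_bound i) _.
  by apply: ler_wpM2l; [exact: divr_ge0 (exprn_ge0 2 s_ge0) c_ge0 | lra].
have u_le : u <= normc (err i) ^+ 2 * (s ^+ 2 / c).
  rewrite -(ler_pM2r V_gt0) uV -[in X in _ <= X]mulrA.
  by rewrite ler_wpM2l ?exprn_ge0 ?normc_ge0.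
apply: le_lt_trans u_le _.
have -> : s ^+ 4 * c = E ^+ 2 * (s ^+ 2 / c) by rewrite /s; field.
rewrite ltr_pM2r ?divr_gt0 ?exprn_gt0 //.
by rewrite ltr_pXn2r ?nnegrE ?normc_ge0 ?err_lt.
Qed.

End Estimates.

End OneStep.

Theorem mainTheorem1 (R : realType) (m : nat)
  (A : {poly R[i]}) (xi : 'I_m -> R[i]) (alpha : 'I_m -> nat)
  (xs : nat -> 'I_m -> R[i]) (d c q : R) :
  (* distinct roots xi with positive multiplicities alpha; A monic of degree n *)
  (forall i j : 'I_m, i != j -> xi i != xi j) ->
  (forall i : 'I_m, (0 < alpha i)%N) ->
  A = \prod_(i < m) ('X - (xi i)%:P) ^+ alpha i ->
  let n := (\sum_(i < m) alpha i)%N in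
  (* d = min_{i <> j} |xi_i - xi_j| *)
  (exists i0 j0 : 'I_m, i0 != j0 /\ d%:C = `|xi i0 - xi j0|) ->
  (forall i j : 'I_m, i != j -> d%:C <= `|xi i - xi j|) ->
  0 < c -> 0 < q -> q < 1 -> 0 < d - 2 * c ->
  let M := (1 + c / (d - 2 * c)) ^+ n - 1 in
  let N := (1 + n%:R * (c / (d - 2 * c)) ^+ 2) ^+ n.-1 - 1 in
  (forall i : 'I_m,
     2 * c ^+ 2 * n%:R * (d - 2 * c) ^- 2 *
       (c / (d - 2 * c) + (1 + c / (d - 2 * c)) * (N + M * N + M))
     < (alpha i)%:R) ->
  (* the iteration, with all quantities defined *)
  (forall k : nat, step_defined A alpha (xs k)) ->
  (forall (k : nat) (i : 'I_m), xs k.+1 i = step A alpha (xs k) i) ->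
  (forall i : 'I_m, `|xs 0%N i - xi i| < (c * q)%:C) ->
  forall (k : nat) (i : 'I_m), `|xs k i - xi i| < (c * q ^+ (4 ^ k))%:C.
Proof.
move=> _ alpha_gt0 A_def n _ d_le c_gt0 q_gt0 q_lt1 D_gt0 M N alpha_big
  xs_def xs_step xs0 k.
have xi_sep i j : i != j -> d <= normc (xi i - xi j).
  by move=> ij; rewrite -lecR -normcE; exact: d_le.
suff err_k : forall i, normc (xs k i - xi i) < c * q ^+ (4 ^ k).
  by move=> i; rewrite normcE ltcR.
elim: k => [|k IH] i; first by rewrite expn0 expr1 -ltcR -normcE.
set E := c * q ^+ (4 ^ k) in IH *.
have E_gt0 : 0 < E by rewrite mulr_gt0 // exprn_gt0.
have E_le_c : E <= c.
  by rewrite /E ler_piMr ?(ltW c_gt0) // exprn_ile1 ?(ltW q_gt0) ?(ltW q_lt1).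
have -> : c * q ^+ (4 ^ k.+1) = (E / c) ^+ 4 * c.
  by rewrite /E expnSr exprM; field; rewrite gt_eqF.
have := step_error_bound alpha_gt0 A_def (xs_def k) xi_sep c_gt0 D_gt0 E_gt0 E_le_c IH.
by rewrite xs_step; apply; apply: alpha_big.
Qed.
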